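(* Let $\alpha_j\ge0$, $j=1,2,\dots$, and define $$A_k:=\alpha_k+\sum_{0<p<k}\ \sum_{0<i_1<\dots<i_p<k}\alpha_{i_1}\alpha_{i_2-i_1}\cdots\alpha_{i_p-i_{p-1}}\alpha_{k-i_p},\qquad k=1,2,\dots$$ Assume $A:=\sum_{j=1}^\infty\alpha_j<1$ and $\alpha_j\le c\,j^{-\gamma}$ for all $j\ge1$, for some $c>0$ and $\gamma>1$. Then there exists $C>0$ such that $A_k\le C\,k^{-\gamma}$ for all $k\ge1$. *)

From HB Require Import structures.
From mathcomp Require Import all_boot all_order all_algebra.
From mathcomp Require Import all_classical all_reals all_analysis.
Set Implicit Arguments. Unset Strict Implicit. Unset Printing Implicit Defensive.
Import Order.TTheory GRing.Theory Num.Theory.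
Local Open Scope ring_scope.

(* Written literally as a sum over all subsets {i_1<...<i_p} of {1,...,k-1}
   (the empty subset, p = 0, gives the term alpha_k); for such a subset the
   term is the product of alpha over the consecutive gaps of
   0 < i_1 < ... < i_p < k. *)
Definition gaps (k : nat) (s : seq nat) : seq nat :=
  pairmap (fun a b => (b - a)%N) 0%N (rcons s k).

Definition Acoef (R : realType) (alpha : nat -> R) (k : nat) : R :=
  \sum_(S : {set 'I_k} | [forall i in S, (0 < val i)%N])
     \prod_(g <- gaps k (sort leq [seq val i | i in S])) alpha g.

From HB Require Import structures.
From mathcomp Require Import all_boot all_order all_algebra.
From mathcomp Require Import all_classical all_reals all_analysis.
From mathcomp Require Import ring lra.
Import Order.TTheory GRing.Theory Num.Theory numFieldNormedType.Exports.
Local Open Scope ring_scope.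

(* Partitioning the sets {i_1 < ... < i_p} by their largest element gives the
   renewal equation A_(n+1) = alpha_(n+1) + sum_(i<n) alpha_(n-i) A_(i+1); summing
   it bounds sum_k A_k by A/(1-A). For the decay pick b in (0,1) with A < b^gamma
   and use strong induction: in a convolution term with k = (i+1) + d, either the
   gap d is at least (1-b)k, so alpha_d <= c ((1-b)k)^-gamma, or i+1 > bk, so
   A_(i+1) <= C (bk)^-gamma. Both contributions are O(k^-gamma), and they add up
   to at most C k^-gamma for a suitable C because b^-gamma A < 1. *)


Lemma pairmap_rcons (T U : Type) (f : T -> T -> U) x s y :
  pairmap f x (rcons s y) = rcons (pairmap f x s) (f (last x s) y).
Proof. by elim: s x => [|z s IHs] x //=; rewrite IHs. Qed.

Lemma gaps_rcons k j s : gaps k (rcons s j) = rcons (gaps j s) (k - j)%N.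
Proof. by rewrite /gaps pairmap_rcons last_rcons. Qed.

Lemma sorted_rcons_ub (s : seq nat) j :
  sorted leq s -> {in s, forall x, x < j}%N -> sorted leq (rcons s j).
Proof.
case: s => [|x s] //= sorted_s s_lt; rewrite rcons_path sorted_s /=.
by apply/ltnW/s_lt; apply: mem_last.
Qed.

Lemma mem_map_val_set m (A : {set 'I_m.+1}) z :
  (z \in [seq val x | x in A]) = (z < m.+1)%N && (inord z \in A).
Proof.
apply/mapP/andP => [[x xA ->]|[zm zA]].
  by split; [exact: ltn_ord | rewrite inord_val -mem_enum].
by exists (inord z); [rewrite mem_enum | rewrite /= inordK].
Qed.

Lemma uniq_map_val_set k (A : {set 'I_k}) : uniq [seq val x | x in A].
Proof. by rewrite map_inj_uniq ?enum_uniq //; apply: val_inj. Qed.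

Definition pos_set k (S : {set 'I_k}) := [forall x in S, (0 < val x)%N].
Definition max_set k (S : {set 'I_k}) := (\max_(x in S) val x)%N.
Definition gap_prod (R : realType) (alpha : nat -> R) k (S : {set 'I_k}) :=
  \prod_(g <- gaps k (sort leq [seq val i | i in S])) alpha g.
Arguments pos_set {k} S.
Arguments max_set {k} S.
Arguments gap_prod {R} alpha {k} S.

Lemma AcoefE (R : realType) (alpha : nat -> R) k :
  Acoef alpha k = \sum_(S : {set 'I_k} | pos_set S) gap_prod alpha S.
Proof. by []. Qed.

Lemma leq_max_set k (S : {set 'I_k}) x : x \in S -> (val x <= max_set S)%N.
Proof. exact: (leq_bigmax_cond (F := fun x : 'I_k => val x)). Qed.

Lemma max_set_lt n (S : {set 'I_n.+1}) : (max_set S < n.+1)%N.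
Proof. by rewrite ltnS; apply/bigmax_leqP => x _; rewrite -ltnS ltn_ord. Qed.

Lemma max_set_mem k (S : {set 'I_k}) :
  (0 < #|S|)%N -> exists2 y, y \in S & val y = max_set S.
Proof.
by move=> /(eq_bigmax_cond (fun x : 'I_k => val x))[y yS maxy]; exists y.
Qed.

Lemma pos_set_max_set_eq0 k (S : {set 'I_k}) :
  pos_set S && (max_set S == 0%N) = (S == finset.set0).
Proof.
apply/andP/eqP => [[posS /eqP maxS0]|->].
  apply/eqP; apply: contraTT posS; rewrite -card_gt0 => /max_set_mem[y yS maxy].
  by apply/forall_inP => /(_ y yS); rewrite maxy maxS0.
by split; [apply/forall_inP => x; rewrite finset.in_set0 | rewrite /max_set big_set0].
Qed.

Lemma gap_prod_set0 (R : realType) (alpha : nat -> R) k :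
  gap_prod alpha (finset.set0 : {set 'I_k}) = alpha k.
Proof.
rewrite /gap_prod; suff -> : [seq val x | x in (finset.set0 : {set 'I_k})] = [::].
  by rewrite /gaps /= big_seq1 subn0.
by rewrite /image_mem enum_set0.
Qed.

Section ExtendByMax.
Variables n i : nat.
Hypothesis i_lt_n : (i < n)%N.

Let top : 'I_n.+1 := @Ordinal n.+1 i.+1 i_lt_n.
Let widen : 'I_i.+1 -> 'I_n.+1 := widen_ord (ltnW i_lt_n : (i.+1 <= n.+1)%N).
Let extend (S : {set 'I_i.+1}) : {set 'I_n.+1} := widen @: S :|: [set top].

Lemma mem_extend S (y : 'I_n.+1) :
  (y \in extend S) = (val y == i.+1) || ((val y < i.+1)%N && (inord y \in S)).
Proof.
rewrite /extend finset.in_setU finset.in_set1 -val_eqE /=.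
case: eqP => _; rewrite ?orbT ?orbF //; apply/finset.imsetP/andP => [[x xS ->]|[yl yS]].
  by rewrite /= ltn_ord inord_val.
by exists (inord y) => //; apply: val_inj; rewrite /= inordK.
Qed.

Lemma mem_extend_widen S x : (widen x \in extend S) = (x \in S).
Proof. by rewrite mem_extend /= ltn_ord inord_val ltn_eqF. Qed.

Lemma extend_inj : injective extend.
Proof. by move=> S1 S2 eqS; apply/setP => x; rewrite -!mem_extend_widen eqS. Qed.

Lemma pos_set_extend S : pos_set (extend S) = pos_set S.
Proof.
apply/forall_inP/forall_inP => posS x; first by rewrite -mem_extend_widen => /posS.
by rewrite mem_extend => /orP[/eqP -> | /andP[xi /posS]] //=; rewrite inordK.
Qed.

Lemma max_set_extend S : max_set (extend S) = i.+1.
Proof.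
apply/eqP; rewrite eqn_leq (@leq_max_set _ _ top) ?mem_extend ?eqxx // andbT.
by apply/bigmax_leqP => y; rewrite mem_extend => /orP[/eqP -> | /andP[/ltnW]].
Qed.

Lemma sort_extend S : sort leq [seq val y | y in extend S] =
  rcons (sort leq [seq val x | x in S]) i.+1.
Proof.
have sorted_r : sorted leq (rcons (sort leq [seq val x | x in S]) i.+1).
  apply: sorted_rcons_ub; first exact/sort_sorted/leq_total.
  by move=> x; rewrite mem_sort mem_map_val_set => /andP[].
rewrite -(sorted_sort leq_trans sorted_r).
apply/(perm_sortP leq_total leq_trans anti_leq)/uniq_perm.
- exact: uniq_map_val_set.
- by rewrite rcons_uniq sort_uniq uniq_map_val_set mem_sort mem_map_val_set ltnn.
move=> z; rewrite mem_rcons in_cons mem_sort !mem_map_val_set mem_extend.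
case: (ltnP z n.+1) => zn /=; first by rewrite !inordK.
rewrite gtn_eqF ?(leq_trans _ zn) //= ltnNge (leq_trans _ zn) //.
by rewrite ltnW.
Qed.

Lemma gap_prod_extend (R : realType) (alpha : nat -> R) S :
  gap_prod alpha (extend S) = alpha (n - i)%N * gap_prod alpha S.
Proof. by rewrite /gap_prod sort_extend gaps_rcons big_rcons subSS mulrC. Qed.

Lemma extend_onto (S : {set 'I_n.+1}) :
  max_set S = i.+1 -> S = extend [set x | widen x \in S].
Proof.
move=> maxS; apply/setP => y; rewrite mem_extend inE.
case: (ltnP y i.+1) => [yi | iy] /=.
  have -> : widen (inord y) = y by apply: val_inj; rewrite /= inordK.
  by rewrite (ltn_eqF yi).
rewrite orbF; apply/idP/eqP => [yS | yi].
  by apply/eqP; rewrite eqn_leq iy -maxS leq_max_set.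
have [|y' y'S maxy'] := @max_set_mem _ S.
  by rewrite card_gt0; apply/eqP => S0; move: maxS; rewrite S0 /max_set big_set0.
by rewrite (_ : y = y') //; apply: val_inj => /=; rewrite yi maxy' maxS.
Qed.

Lemma sum_gap_prod_max (R : realType) (alpha : nat -> R) :
  \sum_(S : {set 'I_n.+1} | pos_set S && (max_set S == i.+1)) gap_prod alpha S
  = alpha (n - i)%N * Acoef alpha i.+1.
Proof.
rewrite AcoefE big_distrr /=.
rewrite (reindex_onto extend (fun S => [set x | widen x \in S])) /=.
  apply: eq_big => [S|S _]; last exact: gap_prod_extend.
  rewrite pos_set_extend max_set_extend eqxx andbT.
  case: (boolP (pos_set S)) => //= _; apply/eqP/setP => x.
  rewrite inE; exact: mem_extend_widen.
by move=> S /andP[_ /eqP maxS]; rewrite -extend_onto.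
Qed.
End ExtendByMax.

Lemma Acoef_rec (R : realType) (alpha : nat -> R) n :
  Acoef alpha n.+1 = alpha n.+1 + \sum_(i < n) alpha (n - i)%N * Acoef alpha i.+1.
Proof.
pose max_ord (S : {set 'I_n.+1}) : 'I_n.+1 := inord (max_set S).
rewrite AcoefE (partition_big max_ord xpredT) //=.
have val_max (S : {set 'I_n.+1}) : val (max_ord S) = max_set S.
  exact/inordK/max_set_lt.
rewrite big_ord_recl; congr (_ + _).
  rewrite (big_pred1 finset.set0) ?gap_prod_set0 // => S /=.
  by rewrite -pos_set_max_set_eq0 -val_eqE val_max.
apply: eq_bigr => i _; rewrite -sum_gap_prod_max //; apply: eq_bigl => S.
by rewrite -val_eqE val_max.
Qed.

Lemma sum_convolution_exchange (R : comPzRingType) (f g : nat -> R) N :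
  \sum_(n < N) \sum_(i < n) f (n - i)%N * g i =
  \sum_(i < N) g i * \sum_(d < N - i.+1) f d.+1.
Proof.
elim: N => [|N IHN]; first by rewrite !big_ord0.
rewrite big_ord_recr /= IHN [RHS]big_ord_recr /= subSS subnn big_ord0 mulr0 addr0.
rewrite -big_split /=; apply: eq_bigr => i _.
by rewrite subSS -(subnSK (ltn_ord i)) big_ord_recr /= subnSK // mulrDr [f _ * _]mulrC.
Qed.

Lemma ge0_ger_powRN (R : realType) (g x y : R) :
  0 <= g -> 0 < x -> x <= y -> y `^ (- g) <= x `^ (- g).
Proof.
move=> g_ge0 x_gt0 xy; have y_gt0 := lt_le_trans x_gt0 xy.
rewrite !powRN lef_pV2 ?posrE ?powR_gt0 //.
by apply: ge0_ler_powR; rewrite // nnegrE ltW.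
Qed.

Lemma exists_powR_gt (R : realType) (T gamma : R) :
  0 <= T -> T < 1 -> 0 < gamma -> exists2 b, 0 < b < 1 & T < b `^ gamma.
Proof.
move=> T_ge0 T_lt1 gamma_gt0.
pose r := T `^ gamma^-1; have r_ge0 : 0 <= r := powR_ge0 _ _.
have r_lt1 : r < 1.
  have := gt0_ltr_powR (r := gamma^-1) _ _ _ T_lt1.
  by rewrite powR1 invr_gt0 !nnegrE ler01 => /(_ gamma_gt0 T_ge0 isT).
have rK : r `^ gamma = T by rewrite -powRrM mulVf ?gt_eqF // powRr1.
exists ((1 + r) / 2); first by apply/andP; split; lra.
by rewrite -rK gt0_ltr_powR ?nnegrE //; lra.
Qed.

Section Renewal.
Context {R : realType} {alpha a : nat -> R} {T : R}.
Hypothesis alpha_ge0 : forall j, (0 < j)%N -> 0 <= alpha j.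
Hypothesis renewal :
  forall n, a n.+1 = alpha n.+1 + \sum_(i < n) alpha (n - i)%N * a i.+1.
Hypothesis partial_sum_le : forall n, \sum_(i < n) alpha i.+1 <= T.
Hypothesis T_lt1 : T < 1.

Lemma partial_sum_bound_ge0 : 0 <= T.
Proof. by have := partial_sum_le 0; rewrite big_ord0. Qed.

Lemma renewal_ge0 n : 0 <= a n.+1.
Proof.
elim/ltn_ind: n => n IHn; rewrite renewal addr_ge0 ?alpha_ge0 //.
apply: sumr_ge0 => i _; rewrite mulr_ge0 ?alpha_ge0 ?subn_gt0 //.
exact: IHn (ltn_ord i).
Qed.

Lemma sum_alpha_rev_le n : \sum_(i < n) alpha (n - i)%N <= T.
Proof.
rewrite (reindex_inj rev_ord_inj) /=.
under eq_bigr => i _ do rewrite subKn ?(ltn_ord i) //.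
exact: partial_sum_le.
Qed.

Lemma renewal_sum_le N : \sum_(n < N) a n.+1 <= T / (1 - T).
Proof.
rewrite ler_pdivlMr ?subr_gt0 // mulrBr mulr1 lerBlDr.
set S := \sum_(n < N) a n.+1.
have S_renewal : S = \sum_(n < N) alpha n.+1 +
              \sum_(n < N) \sum_(i < n) alpha (n - i)%N * a i.+1.
  by rewrite -big_split; apply: eq_bigr => n _; rewrite renewal.
rewrite {1}S_renewal (sum_convolution_exchange _ alpha (fun i => a i.+1)) lerD //.
by rewrite /S big_distrl ler_sum // => i _; rewrite ler_wpM2l ?renewal_ge0.
Qed.

Context {c gamma b : R}.
Hypotheses (c_gt0 : 0 < c) (gamma_gt0 : 0 < gamma) (b_gt0 : 0 < b) (b_lt1 : b < 1).
Hypothesis alpha_le : forall j, (0 < j)%N -> alpha j <= c * j%:R `^ (- gamma).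
Hypothesis T_lt_powR : T < b `^ gamma.

Let w (x : R) := x `^ (- gamma).

Lemma wbT_lt1 : w b * T < 1.
Proof. by rewrite /w powRN mulrC ltr_pdivrMr ?powR_gt0 ?mul1r. Qed.

(* The solution of C = c + c w(1-b) T/(1-T) + C w(b) T, whose three terms bound
   alpha_k and the two halves of the convolution in the renewal equation. *)
Let C := (c + c * w (1 - b) * (T / (1 - T))) / (1 - w b * T).

Lemma renewal_const_gt0 : 0 < C.
Proof.
rewrite divr_gt0 ?subr_gt0 ?wbT_lt1 // ltr_wpDr //.
rewrite !mulr_ge0 ?powR_ge0 ?partial_sum_bound_ge0 ?ltW //.
by rewrite invr_gt0 subr_gt0.
Qed.

Lemma renewal_term_le {n} (i : 'I_n) : a i.+1 <= C * w i.+1%:R ->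
  alpha (n - i)%N * a i.+1 <=
  c * w (1 - b) * w n.+1%:R * a i.+1 + C * w b * w n.+1%:R * alpha (n - i)%N.
Proof.
move=> a_le; set k : R := n.+1%:R; set d := (n - i)%N.
have d_gt0 : (0 < d)%N by rewrite subn_gt0.
have k_split : i.+1%:R + d%:R = k by rewrite -natrD addSn subnKC // ltnW.
have k_gt0 : 0 < k by rewrite ltr0n.
have cw_ge0 : 0 <= c * w (1 - b) * w k by rewrite !mulr_ge0 ?powR_ge0 ?ltW.
have Cw_ge0 : 0 <= C * w b * w k :=
  mulr_ge0 (mulr_ge0 (ltW renewal_const_gt0) (powR_ge0 _ _)) (powR_ge0 _ _).
have [far | near] := lerP ((1 - b) * k) d%:R.
- rewrite -[leLHS]addr0 lerD ?(mulr_ge0 Cw_ge0) ?alpha_ge0 //.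
  rewrite ler_wpM2r ?renewal_ge0 // (le_trans (alpha_le _ d_gt0)) //.
  rewrite -mulrA -powRM ?subr_ge0 ?(ltW b_lt1) ?(ltW k_gt0) //.
  rewrite ler_wpM2l ?(ltW c_gt0) //.
  by rewrite ge0_ger_powRN ?(ltW gamma_gt0) // mulr_gt0 ?subr_gt0.
- rewrite -[leLHS]addr0 addrC lerD ?(mulr_ge0 cw_ge0) ?renewal_ge0 //.
  rewrite [leRHS]mulrC ler_wpM2l ?alpha_ge0 // (le_trans a_le) //.
  rewrite -mulrA -powRM ?(ltW b_gt0) ?(ltW k_gt0) //.
  rewrite ler_wpM2l ?(ltW renewal_const_gt0) //.
  by rewrite ge0_ger_powRN ?(ltW gamma_gt0) ?mulr_gt0 //; lra.
Qed.

Lemma renewal_decay n : a n.+1 <= C * w n.+1%:R.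
Proof.
elim/ltn_ind: n => n IHn.
have terms (i : 'I_n) := renewal_term_le i (IHn i (ltn_ord i)).
rewrite renewal.
rewrite (le_trans (lerD (alpha_le _ (ltn0Sn n)) (ler_sum _ (fun i _ => terms i)))) //.
rewrite big_split /= -!big_distrr /=.
have cw_ge0 : 0 <= c * w (1 - b) * w n.+1%:R by rewrite !mulr_ge0 ?powR_ge0 ?ltW.
have Cw_ge0 : 0 <= C * w b * w n.+1%:R :=
  mulr_ge0 (mulr_ge0 (ltW renewal_const_gt0) (powR_ge0 _ _)) (powR_ge0 _ _).
rewrite (le_trans (lerD (lexx _) (lerD (ler_wpM2l cw_ge0 (renewal_sum_le n))
                                      (ler_wpM2l Cw_ge0 (sum_alpha_rev_le n))))) //.
have C_fix : C * (1 - w b * T) = c + c * w (1 - b) * (T / (1 - T)).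
  by rewrite divfK // subr_eq0 gt_eqF ?wbT_lt1.
have -> : C * w n.+1%:R =
    (c + c * w (1 - b) * (T / (1 - T))) * w n.+1%:R + C * w b * w n.+1%:R * T.
  by rewrite -C_fix; ring.
by rewrite /w; lra.
Qed.

Lemma renewal_powR_bound :
  exists2 C, 0 < C & forall n, a n.+1 <= C * n.+1%:R `^ (- gamma).
Proof. by exists C; [exact: renewal_const_gt0 | exact: renewal_decay]. Qed.
End Renewal.

Theorem lemma12 (R : realType) (alpha : nat -> R) (c gamma : R) :
  (forall j : nat, (0 < j)%N -> 0 <= alpha j) ->
  cvgn (series (fun j : nat => alpha j.+1)) ->
  limn (series (fun j : nat => alpha j.+1)) < 1 ->
  0 < c -> 1 < gamma ->
  (forall j : nat, (0 < j)%N -> alpha j <= c * (j%:R) `^ (- gamma)) ->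
  exists C : R, 0 < C /\
    forall k : nat, (0 < k)%N -> Acoef alpha k <= C * (k%:R) `^ (- gamma).
Proof.
move=> alpha_ge0 cvg_alpha sum_lt1 c_gt0 gamma_gt1 alpha_le.
set T := limn _ in sum_lt1.
have partial_sum_le n : \sum_(i < n) alpha i.+1 <= T.
  rewrite -(big_mkord xpredT (fun i => alpha i.+1)).
  apply: nondecreasing_cvgn_le => //.
  by apply: nondecreasing_series => j _ _; apply: alpha_ge0.
have gamma_gt0 : 0 < gamma by apply: lt_trans gamma_gt1.
have [b /andP[b_gt0 b_lt1] T_lt] :=
  @exists_powR_gt R T gamma (partial_sum_bound_ge0 partial_sum_le) sum_lt1 gamma_gt0.
have [C renewal_const_gt0 decay] := renewal_powR_bound alpha_ge0 (Acoef_rec _ alpha)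
  partial_sum_le sum_lt1 c_gt0 gamma_gt0 b_gt0 b_lt1 alpha_le T_lt.
by exists C; split => // -[|k] // _; apply: decay.
Qed.
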